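(* Every MG-space is homeomorphic to a decomposition space of some locally Menger space.
   Context: A space $X$ is Menger if for each sequence $(\mathcal{U}_n)$ of open covers of $X$ there is a sequence $(\mathcal{V}_n)$ with each $\mathcal{V}_n$ a finite subset of $\mathcal{U}_n$ and $\bigcup_{n}\bigcup\mathcal{V}_n=X$. A space $X$ is locally Menger if for each $x\in X$ there exist an open set $U$ and a Menger subspace $Y$ of $X$ with $x\in U\subseteq Y$. A space $X$ is Menger generated (an MG-space) if a subset $U\subseteq X$ is open in $X$ whenever $U\cap M$ is open in $M$ for every Menger subspace $M$ of $X$. A decomposition of a space $X$ is a partition $\mathcal{D}$ of $X$; with the decomposition map $\varphi:X\to\mathcal{D}$ sending $x$ to the member of $\mathcal{D}$ containing $x$, $\mathcal{D}$ is topologized by declaring $\mathcal{U}\subseteq\mathcal{D}$ open iff $\varphi^{-1}(\mathcal{U})$ is open in $X$; this is the decomposition space. *)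

From HB Require Import structures.
From mathcomp Require Import all_boot all_order.
From mathcomp Require Import all_classical.
From mathcomp Require Import topology.
Unset Printing Implicit Defensive.
Local Open Scope classical_set_scope.

Definition Menger_op {T : Type} (op : set (set T)) : Prop :=
  forall Us : nat -> set (set T),
    (forall n, Us n `<=` op /\ \bigcup_(u in Us n) u = setT) ->
    exists Vs : nat -> set (set T),
      (forall n, finite_set (Vs n) /\ Vs n `<=` Us n) /\
      \bigcup_n \bigcup_(v in Vs n) v = setT.

Definition subspace_open {X : topologicalType} (M : set X)
  : set (set {x : X | M x}) :=
  fun V => exists U : set X, open U /\ V = (@sval X M) @^-1` U.

Definition Menger_subspace {X : topologicalType} (M : set X) : Prop :=
  Menger_op (subspace_open M).

Definition locally_Menger (X : topologicalType) : Prop :=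
  forall x : X, exists (U Y : set X),
    open U /\ Menger_subspace Y /\ U x /\ U `<=` Y.

Definition MG_space (X : topologicalType) : Prop :=
  forall U : set X,
    (forall M : set X, Menger_subspace M ->
       subspace_open M ((@sval X M) @^-1` U)) ->
    open U.

Definition decomposition {Y : Type} (D : set (set Y)) : Prop :=
  (forall P, D P -> P !=set0) /\
  (forall P Q, D P -> D Q -> P `&` Q !=set0 -> P = Q) /\
  (forall y : Y, exists P, D P /\ P y).

(* Preimage under the decomposition map phi : Y -> D of a family W of members
   of D: phi(y) ∈ W iff y lies in some member of W (D being a partition). *)
Definition decomp_preimage {Y : Type} (W : set (set Y)) : set Y :=
  [set y | exists P, W P /\ P y].

Definition decomp_open {Y : topologicalType} (D : set (set Y))
  (W : set (set Y)) : Prop :=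
  W `<=` D /\ open (decomp_preimage W).

Definition homeomorphic_to_decomposition (X Y : topologicalType)
  (D : set (set Y)) : Prop :=
  exists f : X -> set Y,
    injective f /\ range f = D /\
    (forall U : set X, open U <-> decomp_open D (f @` U)).

(** The space [Y] is the topological sum of all Menger subspaces of [X]: its
    points are pairs [(M, x)] with [M] a Menger subspace and [x] in [M], and
    each summand carries the subspace topology of [M].  Every summand is open
    and Menger, so [Y] is locally Menger.  The fibres of [(M, x) |-> x] form a
    decomposition of [Y], nonempty because singletons are Menger.  A set [U]
    of [X] corresponds to an open set of the decomposition space iff its trace
    on every Menger subspace is open there, which for an MG-space means
    exactly that [U] is open. *)
From HB Require Import structures.
From mathcomp Require Import all_boot all_order all_classical topology.

Local Open Scope classical_set_scope.

Lemma Menger_op_image {A B : Type} (opA : set (set A)) (opB : set (set B))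
    (h : A -> B) :
  range h = setT -> (forall V, opB V -> opA (h @^-1` V)) ->
  Menger_op opA -> Menger_op opB.
Proof.
move=> h_surj h_cont MA Us Us_cover.
have preimage_cover n : preimage h @` Us n `<=` opA /\
    \bigcup_(u in preimage h @` Us n) u = setT.
  split; first by move=> _ [V /(Us_cover n).1 /h_cont ? <-].
  apply/seteqP; split=> // a _.
  have [V UV Vha] : (\bigcup_(u in Us n) u) (h a) by rewrite (Us_cover n).2.
  by exists (h @^-1` V); first exists V.
have [Vs [Vs_fin Vs_cover]] := MA _ preimage_cover.
have preimage_inj : injective (preimage h).
  by move=> V V' eVV'; rewrite -(image_preimage V h_surj) eVV' image_preimage.
exists (fun n => Us n `&` preimage h @^-1` Vs n); split.
  move=> n; split; last by move=> ? [].
  apply: (sub_finite_set (B := preimage h @^-1` Vs n)); first by move=> ? [].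
  by apply: finite_preimage (Vs_fin n).1 => V V' _ _; apply: preimage_inj.
apply/seteqP; split=> // b _.
have [a _ <-] : range h b by rewrite h_surj.
have [n _ [V' VsV' V'a]] : (\bigcup_n \bigcup_(v in Vs n) v) a.
  by rewrite Vs_cover.
have [V UV eV'] := (Vs_fin n).2 _ VsV'; subst V'.
by exists n => //; exists V.
Qed.

Lemma Menger_subspace_set1 {X : topologicalType} (x : X) :
  Menger_subspace [set x].
Proof.
move=> Us Us_cover; pose x1 : {z | [set x] z} := exist _ x erefl.
have all_x1 (z : {z | [set x] z}) : z = x1.
  by case: z => z zx; apply: eq_exist; exact: zx.
have /choice [V x1V] n : exists V, Us n V /\ V x1.
  have [V UV Vx1] : (\bigcup_(u in Us n) u) x1 by rewrite (Us_cover n).2.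
  by exists V.
exists (fun n => [set V n]); split.
  by move=> n; split; [exact: finite_set1 | move=> _ ->; exact: (x1V n).1].
apply/seteqP; split=> // z _; rewrite (all_x1 z).
by exists 0%N => //; exists (V 0%N) => //; exact: (x1V 0%N).2.
Qed.

Definition Menger_sum (X : topologicalType) :=
  {p : set X * X | Menger_subspace p.1 /\ p.1 p.2}.

HB.instance Definition _ X := gen_eqMixin (Menger_sum X).
HB.instance Definition _ X := gen_choiceMixin (Menger_sum X).

Definition summand {X} (y : Menger_sum X) : set X := (sval y).1.
Definition point {X} (y : Menger_sum X) : X := (sval y).2.

Definition Menger_sum_in {X : topologicalType} {M : set X}
    (hM : Menger_subspace M) (m : {x | M x}) : Menger_sum X :=
  exist _ (M, sval m) (conj hM (svalP m)).

Definition Menger_sum_open {X : topologicalType} (W : set (Menger_sum X)) :=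
  forall M, Menger_subspace M -> exists U : set X, open U /\
    forall y, summand y = M -> (W y <-> U (point y)).

Lemma Menger_sum_openT X : Menger_sum_open (@setT (Menger_sum X)).
Proof. by move=> M _; exists setT; split=> //; exact: openT. Qed.

Lemma Menger_sum_openI X : setI_closed (@Menger_sum_open X).
Proof.
move=> A B oA oB M hM.
have [UA [oUA eA]] := oA M hM; have [UB [oUB eB]] := oB M hM.
exists (UA `&` UB); split; first exact: openI.
by move=> y yM; rewrite /setI /= (eA y yM) (eB y yM).
Qed.

Lemma Menger_sum_openU X (I : Type) (F : I -> set (Menger_sum X)) :
  (forall i, Menger_sum_open (F i)) -> Menger_sum_open (\bigcup_i F i).
Proof.
move=> oF M hM; have /choice [U oU] := fun i => oF i M hM.
exists (\bigcup_i U i); split.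
  by apply: bigcup_open => i _; exact: (oU i).1.
by move=> y yM; split=> -[i _ ?]; exists i => //; apply/((oU i).2 y yM).
Qed.

HB.instance Definition _ X := isOpenTopological.Build (Menger_sum X)
  (@Menger_sum_openT X) (@Menger_sum_openI X) (@Menger_sum_openU X).

Lemma Menger_sum_openE X (W : set (Menger_sum X)) : open W = Menger_sum_open W.
Proof. by []. Qed.

Section MengerSum.
Variable X : topologicalType.

Lemma open_Menger_sum_trace {W : set (Menger_sum X)} {M : set X}
    (hM : Menger_subspace M) :
  open W -> subspace_open M (Menger_sum_in hM @^-1` W).
Proof.
rewrite Menger_sum_openE => /(_ M hM) [U [oU eW]]; exists U; split=> //.
by apply/seteqP; split=> m /(eW (Menger_sum_in hM m) erefl).
Qed.

Lemma open_summand (M : set X) : open [set y : Menger_sum X | summand y = M].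
Proof.
rewrite Menger_sum_openE => M' _; have [->|M'M] := pselect (M' = M).
  by exists setT; split; [exact: openT | move=> y /= ->].
by exists set0; split; [exact: open0 | move=> y /= ->].
Qed.

Lemma Menger_summand (M : set X) : Menger_subspace M ->
  Menger_subspace [set y : Menger_sum X | summand y = M].
Proof.
move=> hM; pose h m : {y | summand y = M} := exist _ (Menger_sum_in hM m) erefl.
apply: (@Menger_op_image _ _ _ _ h _ _ hM).
  apply/seteqP; split=> // -[[[M' x] [hM' M'x]] eM] _.
  change (M' = M) in eM; subst M.
  by exists (exist _ x M'x) => //; do 2 apply: eq_exist.
by move=> _ [W [oW ->]]; exact: open_Menger_sum_trace.
Qed.

Lemma locally_Menger_Menger_sum : locally_Menger (Menger_sum X).
Proof.
move=> y; have hM : Menger_subspace (summand y) := (svalP y).1.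
exists [set y' | summand y' = summand y], [set y' | summand y' = summand y].
split; first exact: open_summand.
split; first exact: Menger_summand.
by split.
Qed.

Definition fiber (x : X) : set (Menger_sum X) := [set y | point y = x].

Lemma fiber_neq0 (x : X) : fiber x !=set0.
Proof.
by exists (Menger_sum_in (Menger_subspace_set1 x) (exist _ x erefl)).
Qed.

Lemma fiber_inj : injective fiber.
Proof.
by move=> x x' e; have [y yx] := fiber_neq0 x; have := yx; rewrite e => <-.
Qed.

Lemma decomposition_fiber : decomposition (range fiber).
Proof.
split; first by move=> _ [x _ <-]; exact: fiber_neq0.
split; last by move=> y; exists (fiber (point y)); split=> //; exists (point y).
by move=> _ _ [x _ <-] [x' _ <-] [y [<- <-]].
Qed.

Lemma decomp_preimage_fiber (U : set X) :
  decomp_preimage (fiber @` U) = point @^-1` U.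
Proof.
apply/seteqP; split=> [y [_ [[x Ux <-] /= ->]] // | y Uy].
by exists (fiber (point y)); split=> //; exists (point y).
Qed.

Lemma open_point_preimage (U : set X) : open U -> open (point @^-1` U).
Proof. by move=> oU; rewrite Menger_sum_openE => M _; exists U. Qed.

Lemma MG_open_point_preimage (U : set X) :
  MG_space X -> open (point @^-1` U) -> open U.
Proof.
by move=> MG oU; apply: MG => M hM; exact (open_Menger_sum_trace hM oU).
Qed.

End MengerSum.

Theorem theorem4p24 (X : topologicalType) :
  MG_space X ->
  exists (Y : topologicalType) (D : set (set Y)),
    locally_Menger Y /\ decomposition D /\ homeomorphic_to_decomposition X Y D.
Proof.
move=> MG; exists (Menger_sum X), (range (@fiber X)).
split; first exact: locally_Menger_Menger_sum.
split; first exact: decomposition_fiber.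
exists (@fiber X); split; first exact: fiber_inj.
split=> // U; rewrite /decomp_open decomp_preimage_fiber; split.
  by move=> oU; split; [exact: image_subset | exact: open_point_preimage].
by move=> [_]; exact: MG_open_point_preimage.
Qed.
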